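(* Let $m,n\ge2$ be integers and let $H$ be the graph on the vertex set $\{x_{i,j}: i\in[m], j\in[n]\}$ with edge set $\{\{x_{i,j},x_{i',j+1}\}: 1\le i<i'\le m,\ 1\le j\le n-1\}$. Then $H$ is a chordal bipartite graph.
   Context: A bipartite graph is chordal bipartite if every cycle of length at least six has a chord. *)

From mathcomp Require Import all_boot.
Set Implicit Arguments. Unset Strict Implicit. Unset Printing Implicit Defensive.

Definition bipartite (T : finType) (e : rel T) : Prop :=
  exists c : T -> bool, forall x y, e x y -> c x != c y.

(* A cycle of length k = size s: the k vertices of s are pairwise distinct
   and consecutive ones (cyclically, via mathcomp's [cycle]) are adjacent. *)
Definition is_graph_cycle (T : finType) (e : rel T) (s : seq T) : Prop :=
  [/\ 3 <= size s, uniq s & cycle e s].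

Definition has_chord (T : finType) (e : rel T) (s : seq T) : Prop :=
  exists x y, [/\ x \in s, y \in s, e x y, y != next s x & x != next s y].

Definition chordal_bipartite (T : finType) (e : rel T) : Prop :=
  bipartite e /\
  forall s : seq T, is_graph_cycle e s -> 6 <= size s -> has_chord e s.

(* The graph H on vertices x_{i,j}, i in [m], j in [n] (0-indexed as
   'I_m * 'I_n): x_{i,j} ~ x_{i',j+1} whenever i < i'  (symmetrised). *)
Definition adjH (m n : nat) : rel ('I_m * 'I_n) :=
  fun x y =>
    ((y.2 == x.2.+1 :> nat) && (x.1 < y.1)) ||
    ((x.2 == y.2.+1 :> nat) && (y.1 < x.1)).
Arguments adjH m n : clear implicits.

From mathcomp Require Import all_boot zify.

Set Implicit Arguments.
Unset Strict Implicit.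
Unset Printing Implicit Defensive.

(* H is bipartite, coloured by the parity of the column.  For chords, pick on
   the cycle the vertex v of largest column and, within that column, smallest
   row.  Its cycle neighbours u, w lie one column to the left in rows above v.
   Their other neighbours u', w' either return to the column of v, strictly
   below v, and are then adjacent to w (resp. u); or they move one more column
   to the left, above u (resp. w), and then whichever of u, w is lower is
   adjacent to the outer neighbour of the other. *)

Section CycleChords.

Variables (T : finType) (e : rel T).

Lemma has_chord_rot k (s : seq T) :
  uniq s -> has_chord e (rot k s) -> has_chord e s.
Proof.
move=> s_uniq [x [y [xs ys exy y_nx x_ny]]]; exists x, y.
by rewrite -(mem_rot k) -(mem_rot k s y) -(next_rot k s_uniq x)
           -(next_rot k s_uniq y).
Qed.

Lemma has_chord_window (u' u v w w' : T) r :
  uniq [:: u', u, v, w, w' & r] -> e u' w || e u w' ->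
  has_chord e [:: u', u, v, w, w' & r].
Proof.
case/and5P; rewrite !inE !negb_or.
move=> /and5P[nu'u nu'v nu'w nu'w' _] /and4P[nuv nuw nuw' nur].
move=> /and3P[nvw nvw' _] /andP[nww' _] _.
case/orP=> [eu'w | euw'].
  exists u', w; rewrite !inE !eqxx ?orbT; split=> //=.
    by rewrite eqxx eq_sym.
  by rewrite !(eq_sym w) (negbTE nu'w) (negbTE nuw) (negbTE nvw) eqxx.
exists u, w'; rewrite !inE !eqxx ?orbT; split=> //=.
  by rewrite (eq_sym u) (negbTE nu'u) eqxx eq_sym.
rewrite !(eq_sym w') (negbTE nu'w') (negbTE nuw') (negbTE nvw') (negbTE nww').
case: r nur => [|x r] /=; rewrite eqxx; first by rewrite eq_sym.
by rewrite inE negb_or => /andP[].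
Qed.

End CycleChords.

Lemma rot_window (T : eqType) (s : seq T) v : v \in s -> 5 <= size s ->
  exists k u' u w w' r, rot k s = [:: u', u, v, w, w' & r].
Proof.
move=> vs size_s; have := rot_index vs; set t := drop _ _ ++ _ => rot_s.
have : 4 <= size t by rewrite -ltnS -/(size (v :: t)) -rot_s size_rot.
case: t rot_s => [|w [|w' t]] // rot_s.
case/lastP: t rot_s => [|t u] //; case/lastP: t => [|r u'] // rot_s _.
have {}rot_s : rot (index v s) s = [:: v, w, w' & r] ++ [:: u'; u].
  by rewrite rot_s -!cats1 -catA.
exists (let k := size s - 2 + index v s in if k <= size s then k else k - size s).
exists u', u, w, w', r.
rewrite -rot_add_mod ?leq_subr ?index_size // rot_s.
by rewrite -(size_rot (index v s)) rot_s size_cat addnK rot_size_cat.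
Qed.

Section GraphH.

Variables m n : nat.
Local Notation V := ('I_m * 'I_n)%type.
Local Notation adj := (adjH m n).

Lemma adjH_sym : symmetric adj.
Proof. by move=> x y; rewrite /adjH orbC. Qed.

Lemma adjH_bipartite : bipartite adj.
Proof.
exists (fun x : V => odd x.2) => x y.
by case/orP=> /andP[/eqP -> _] /=; rewrite ?negbK; case: (odd _).
Qed.

Lemma vertex_neq (x y : V) :
  (x != y) = (x.1 != y.1 :> nat) || (x.2 != y.2 :> nat).
Proof. by case: x y => [x1 x2] [y1 y2]; rewrite xpair_eqE negb_and. Qed.

Definition lex_le (x v : V) : bool :=
  (x.2 < v.2) || (x.2 == v.2 :> nat) && (v.1 <= x.1).

Definition lex_key (x : V) : nat := x.2 * m + (m - x.1).

Lemma lex_le_key (x v : V) : lex_key x <= lex_key v -> lex_le x v.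
Proof.
rewrite /lex_key /lex_le => le_key.
have x1m := ltn_ord x.1; have v1m := ltn_ord v.1.
have : x.2 <= v.2.
  rewrite leqNgt; apply/negP => lt_v2x2.
  have : v.2.+1 * m <= x.2 * m by rewrite leq_mul2r lt_v2x2 orbT.
  rewrite mulSn; lia.
rewrite leq_eqVlt => /orP[/eqP e2|->] //.
rewrite e2 in le_key *; rewrite ltnn eqxx /=; lia.
Qed.

Lemma adjH_lex_max (v x : V) :
  adj v x -> lex_le x v -> (x.2.+1 == v.2) && (x.1 < v.1).
Proof. rewrite /adjH /lex_le; lia. Qed.

Lemma adjH_lex_below (v u x : V) :
  u.2.+1 = v.2 :> nat -> adj u x -> lex_le x v -> x != v ->
  (x.2.+1 == u.2) && (x.1 < u.1) || (x.2 == v.2 :> nat) && (v.1 < x.1).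
Proof. rewrite vertex_neq /adjH /lex_le; lia. Qed.

Lemma adjH_chord_at_max (u' u v w w' : V) :
  adj u' u -> adj u v -> adj v w -> adj w w' ->
  u' != v -> w' != v -> u != w -> all (lex_le^~ v) [:: u'; u; w; w'] ->
  adj u' w || adj u w'.
Proof.
move=> u'u uv vw ww' nu'v nw'v nuw.
case/and5P=> le_u' le_u le_w le_w' _.
rewrite adjH_sym in uv; rewrite adjH_sym in u'u.
have /andP[/eqP u2 u1] := adjH_lex_max uv le_u.
have /andP[/eqP w2 w1] := adjH_lex_max vw le_w.
have := adjH_lex_below u2 u'u le_u' nu'v.
have := adjH_lex_below w2 ww' le_w' nw'v.
move: nuw; rewrite vertex_neq /adjH; lia.
Qed.

Lemma adjH_cycle_chord (s : seq V) :
  is_graph_cycle adj s -> 5 <= size s -> has_chord adj s.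
Proof.
case=> _ s_uniq s_cycle size_s.
have [v vs v_max] : exists2 v, v \in s & {in s, forall x, lex_key x <= lex_key v}.
  case: s {s_uniq s_cycle} size_s => [|x0 s] // _.
  have x0s : x0 \in x0 :: s by rewrite mem_head.
  by case: (arg_maxnP lex_key x0s) => v; exists v.
have [k [u' [u [w [w' [r rot_s]]]]]] := rot_window vs size_s.
have win_uniq : uniq [:: u', u, v, w, w' & r] by rewrite -rot_s rot_uniq.
apply: (has_chord_rot (k := k) s_uniq); rewrite rot_s.
apply: has_chord_window => //.
have := s_cycle; rewrite -(rot_cycle k) rot_s /= => /and5P[u'u uv vw ww' _].
move: win_uniq => /and5P[]; rewrite !inE !negb_or.
move=> /and5P[_ nu'v _ _ _] /and4P[_ nuw _ _] /and3P[_ nvw' _] _ _.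
apply: (adjH_chord_at_max (v := v)) => //; first by rewrite eq_sym.
apply/allP=> x x_win; apply/lex_le_key/v_max.
rewrite -(mem_rot k) rot_s; move: x_win; rewrite !inE.
by case/or4P=> ->; rewrite ?orbT.
Qed.

End GraphH.

Theorem lemma3p4 (m n : nat) :
  2 <= m -> 2 <= n -> chordal_bipartite (adjH m n).
Proof.
move=> _ _; split; first exact: adjH_bipartite.
by move=> s s_cycle /ltnW; apply: adjH_cycle_chord.
Qed.
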